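(* Let $n\ge 1$ be an integer, suppose that $A\subseteq\mathbb{Z}_5^n$ is sum-free, and that $H<\mathbb{Z}_5^n$ is a maximal proper subgroup. If there is an $H$-coset $g+H$ with $|A\cap(g+H)|>\frac12|H|$, then $A$ has non-empty intersection with at most three $H$-cosets.
   Context: $\mathbb{Z}_5^n$ denotes the elementary abelian $5$-group of rank $n$. A subset $S$ of an abelian group is sum-free if there are no $x,y,z\in S$ (not necessarily distinct) with $x+y=z$. *)

From mathcomp Require Import all_boot all_order all_algebra.
Set Implicit Arguments. Unset Strict Implicit. Unset Printing Implicit Defensive.
Import GRing.Theory.
Local Open Scope ring_scope.

Definition Z5n (n : nat) := 'rV['Z_5]_n.

Definition is_subgroup n (H : {set Z5n n}) : bool :=
  (0 \in H) && [forall x in H, forall y in H, x - y \in H].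

Definition maximal_proper_subgroup n (H : {set Z5n n}) : Prop :=
  [/\ is_subgroup H, H != setT &
      forall K : {set Z5n n}, is_subgroup K -> H \subset K -> K = H \/ K = setT].

Definition sum_free n (A : {set Z5n n}) : Prop :=
  forall x y z, x \in A -> y \in A -> z \in A -> x + y != z.

Definition coset_add n (g : Z5n n) (H : {set Z5n n}) : {set Z5n n} :=
  [set g + h | h in H].

Definition cosets_of n (H : {set Z5n n}) : {set {set Z5n n}} :=
  [set coset_add g H | g : Z5n n].

From mathcomp Require Import all_boot all_order all_algebra.
Local Open Scope ring_scope.
Import GRing.Theory.

Set Implicit Arguments.
Unset Strict Implicit.
Unset Printing Implicit Defensive.

(* Let B = A ∩ (g + H), so |B| > |H|/2. If z ∈ A ∩ H, then z + B and B are two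
   subsets of g + H of total size > |H|, so z + b = b' for some b, b' ∈ B;
   if z ∈ A ∩ (2g + H), then likewise z - B meets B, i.e. b + b' = z. Both
   contradict sum-freeness. In particular g ∉ H, so by maximality H + <g> is
   the whole group, whose H-cosets are therefore the kg + H (k < 5); A can
   only meet those with k = 1, 3, 4. *)

Lemma setI_neq0_card (T : finType) (C X Y : {set T}) :
  X \subset C -> Y \subset C -> (#|C| < #|X| + #|Y|)%N -> X :&: Y != set0.
Proof.
move=> sXC sYC ltC; rewrite -card_gt0 -(ltn_add2l #|X :|: Y|) addn0 cardsUI.
by apply: leq_ltn_trans ltC; apply/subset_leq_card; rewrite subUset sXC.
Qed.

Lemma mulrn_modp (p : nat) (V : lmodType 'Z_p) (v : V) (m : nat) :
  (1 < p)%N -> v *+ (m %% p) = v *+ m.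
Proof. by move=> p_gt1; rewrite -!scaler_nat Zp_nat_mod. Qed.

Section Cosets.

Variables (n : nat) (H : {set Z5n n}).
Hypothesis sgH : is_subgroup H.

Lemma subgroup0 : 0 \in H.
Proof. by case/andP: sgH. Qed.

Lemma subgroupB x y : x \in H -> y \in H -> x - y \in H.
Proof.
by move=> xH; case/andP: sgH => _ /forall_inP/(_ x xH)/forall_inP; apply.
Qed.

Lemma subgroupD x y : x \in H -> y \in H -> x + y \in H.
Proof.
move=> xH yH; have -> : x + y = x - (0 - y) by rewrite sub0r opprK.
by rewrite !subgroupB ?subgroup0.
Qed.

Lemma mem_coset_add c x : (x \in coset_add c H) = (x - c \in H).
Proof.
apply/imsetP/idP => [[h hH ->]|xcH]; first by rewrite addrC addKr.
by exists (x - c); rewrite // addrC subrK.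
Qed.

Lemma card_coset_add c : #|coset_add c H| = #|H|.
Proof. exact/card_imset/addrI. Qed.

Lemma coset_add_eq c x : x \in coset_add c H -> coset_add x H = coset_add c H.
Proof.
rewrite mem_coset_add => xcH; apply/setP => y; rewrite !mem_coset_add.
have -> : y - c = (y - x) + (x - c) by rewrite addrA subrK.
apply/idP/idP => [yxH|ycH]; first exact: subgroupD.
by rewrite -(addrK (x - c) (y - x)) subgroupB.
Qed.

End Cosets.

Section LargeCosetPiece.

Variables (n : nat) (A H : {set Z5n n}) (g : Z5n n).
Hypotheses (sfA : sum_free A) (sgH : is_subgroup H).
Hypothesis large : (#|H| < 2 * #|A :&: coset_add g H|)%N.

Let B := A :&: coset_add g H.

Let injective_image_meets f :
  injective f -> {in B, forall b, f b - g \in H} -> exists2 b, b \in B & f b \in B.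
Proof.
move=> inj_f fBg.
have sfB : f @: B \subset coset_add g H.
  by apply/subsetP => _ /imsetP[b bB ->]; rewrite mem_coset_add fBg.
have sB : B \subset coset_add g H by apply: subsetIr.
have := setI_neq0_card sfB sB; rewrite card_coset_add card_imset // addnn -mul2n.
by case/(_ large)/set0Pn => _ /setIP[/imsetP[b bB ->] fbB]; exists b.
Qed.

Lemma sum_free_notin_subgroup z : z \in A -> z \notin H.
Proof.
move=> zA; apply/negP => zH.
have [|b /setIP[bA _] /setIP[zbA _]] := injective_image_meets (addrI z).
  by move=> b /setIP[_]; rewrite mem_coset_add -addrA; apply: subgroupD.
by have := sfA zA bA zbA; rewrite eqxx.
Qed.

Lemma sum_free_notin_coset2 z : z \in A -> z \notin coset_add (g *+ 2) H.
Proof.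
rewrite mem_coset_add => zA; apply/negP => z2gH.
have inj_zB : injective (fun b => z - b) by move=> b1 b2 /addrI/oppr_inj.
have [|b /setIP[bA _] /setIP[zbA _]] := injective_image_meets inj_zB.
  move=> b /setIP[_]; rewrite mem_coset_add => bgH.
  have -> : z - b - g = (z - g *+ 2) - (b - g).
    by rewrite mulr2n opprB opprD !addrA addrNK addrAC.
  exact: subgroupB.
by have := sfA bA zbA zA; rewrite addrC subrK eqxx.
Qed.

Lemma notin_subgroup_large_coset : g \notin H.
Proof.
have /card_gt0P[b /setIP[bA]] : (0 < #|B|)%N.
  by move: large; rewrite lt0n; apply: contraTneq => ->.
rewrite mem_coset_add => bgH; move: (sum_free_notin_subgroup bA).
by apply: contra => gH; rewrite -(subrK g b) subgroupD.
Qed.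

End LargeCosetPiece.

Section MaximalSubgroupQuotient.

Variables (n : nat) (H : {set Z5n n}) (g : Z5n n).
Hypotheses (maxH : maximal_proper_subgroup H) (gH : g \notin H).

Let sgH : is_subgroup H. Proof. by case: maxH. Qed.

Let span := [set x | [exists k : 'I_5, x - g *+ k \in H]].

Let mem_span x : reflect (exists m : nat, x - g *+ m \in H) (x \in span).
Proof.
rewrite inE; apply: (iffP existsP) => [[k xkH]|[m xmH]]; first by exists k.
by exists (Ordinal (ltn_pmod m (isT : (0 < 5)%N))); rewrite /= mulrn_modp.
Qed.

Let subgroup_span : is_subgroup span.
Proof.
apply/andP; split; first by apply/mem_span; exists 0%N; rewrite subr0 subgroup0.
apply/forall_inP => x /mem_span[k xkH]; apply/forall_inP => y /mem_span[l ylH].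
apply/mem_span; exists (k + 4 * l)%N.
have g4l : g *+ (4 * l) = g *- l.
  by apply/eqP; rewrite -addr_eq0 -mulrnDr -mulSnr -mulrn_modp // modnMr.
have -> : x - y - g *+ (k + 4 * l) = (x - g *+ k) - (y - g *+ l).
  by rewrite mulrnDr g4l !opprB addrACA [RHS]addrACA [- y + _]addrC.
exact: subgroupB.
Qed.

Lemma maximal_subgroup_cover x : exists k : 'I_5, x \in coset_add (g *+ k) H.
Proof.
have [_ _ /(_ span subgroup_span) cover] := maxH.
have [|spanH|spanT] := cover.
- by apply/subsetP => h hH; apply/mem_span; exists 0%N; rewrite subr0.
- have : g \in span by apply/mem_span; exists 1%N; rewrite subrr subgroup0.
  by rewrite spanH (negbTE gH).
- have : x \in span by rewrite spanT inE.
  by rewrite inE => /existsP[k xkH]; exists k; rewrite mem_coset_add.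
Qed.

End MaximalSubgroupQuotient.

Theorem proposition2 (n : nat) (A H : {set Z5n n}) :
  (1 <= n)%N -> sum_free A -> maximal_proper_subgroup H ->
  (exists g : Z5n n, (#|H| < 2 * #|A :&: coset_add g H|)%N) ->
  (#|[set C in cosets_of H | C :&: A != set0]| <= 3)%N.
Proof.
move=> _ sfA maxH [g large]; have [sgH _ _] := maxH.
have gH := notin_subgroup_large_coset sfA sgH large.
set met := [:: coset_add g H; coset_add (g *+ 3) H; coset_add (g *+ 4) H].
apply: leq_trans (card_size met); rewrite -[#|met|]cardsE; apply/subset_leq_card.
apply/subsetP => C; rewrite inE => /andP[/imsetP[c _ ->] /set0Pn[x /setIP[xc xA]]].
have [k xk] := maximal_subgroup_cover maxH gH x.
rewrite -(coset_add_eq sgH xc) (coset_add_eq sgH xk) !inE.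
have xH := sum_free_notin_subgroup sfA sgH large xA.
have x2gH := sum_free_notin_coset2 sfA sgH large xA.
case: k xk => [[|[|[|[|[|//]]]]] ?] /= xk; rewrite ?eqxx ?orbT //.
- by rewrite mem_coset_add mulr0n subr0 (negbTE xH) in xk.
- by rewrite xk in x2gH.
Qed.
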